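(* Let $\mathcal{G}_p=(\mathcal{V},\mathcal{E}_p,(\mathcal{C}^{\mathsf{WW}}_p,\mathcal{C}^{\mathsf{WR}}_p))$ be the pruned hyper-polygraph of a history, let $\Phi_{\mathcal{G}_p}$ be its encoding, and let $\mathcal{F}=\Phi_{\mathcal{G}_p}\wedge\bigwedge_{i=1}^{n}\rho_i$ where $\rho_1,\dots,\rho_n$ are all the 2-width-cycle clauses of $\mathcal{G}_p$. Then $\Phi_{\mathcal{G}_p}$ is satisfiable modulo acyclicity if and only if $\mathcal{F}$ is satisfiable modulo acyclicity.
   Context: Histories and hyper-polygraphs: a history $\mathcal{H}=(\mathcal{T},\mathsf{SO})$ is a set of transactions (each a finite non-empty set of operations $\mathsf{R}(x,v)$, $\mathsf{W}(x,v)$ with a strict total program order, disjoint across transactions) with session order $\mathsf{SO}$ (a union of strict total orders on disjoint subsets), containing $T_\bot$ that writes every key's initial value and $\mathsf{SO}$-precedes all others. $T\vdash\mathsf{W}(x,v)$: $T$'s last write to $x$ has value $v$; $T\vdash\mathsf{R}(x,v)$: $T$ reads $x$ before writing it, first such read returns $v$; $\mathsf{WriteTx}_x=\{T\mid T\vdash\mathsf{W}(x,\_)\}$. Its hyper-polygraph $\mathcal{G}=(\mathcal{V},\mathcal{E},(\mathcal{C}^{\mathsf{WW}},\mathcal{C}^{\mathsf{WR}}))$: $\mathcal{V}=\mathcal{T}$; edges $T\xrightarrow{\mathsf{t}(x)}S$, $\mathsf{t}\in\{\mathsf{SO},\mathsf{WR},\mathsf{WW},\mathsf{RW}\}$; $\mathcal{E}$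 contains the $\mathsf{SO}$ edges and $T\xrightarrow{\mathsf{WR}(x)}S$ whenever $S\vdash\mathsf{R}(x,v)$ and $T$ is the unique transaction with $T\vdash\mathsf{W}(x,v)$; $\mathcal{C}^{\mathsf{WW}}=\{\{T\xrightarrow{\mathsf{WW}(x)}S,S\xrightarrow{\mathsf{WW}(x)}T\}\mid T\neq S\in\mathsf{WriteTx}_x\}$; $\mathcal{C}^{\mathsf{WR}}=\{\{T_i\xrightarrow{\mathsf{WR}(x)}S\mid T_i\vdash\mathsf{W}(x,v)\}\mid S\vdash\mathsf{R}(x,v)\}$. Pruning: states $\langle\mathcal{E},\mathcal{C}^{\mathsf{WW}},\mathcal{C}^{\mathsf{WR}}\rangle$, starting from those of $\mathcal{G}$, with rules applied until none applies: (Elim) remove from a constraint a candidate edge $e$ such that $\mathcal{E}\cup\{e\}\cup D(e)$ is cyclic, where for $e=T\xrightarrow{\mathsf{WW}(x)}T'$, $D(e)=\{S\xrightarrow{\mathsf{RW}(x)}T'\mid T\xrightarrow{\mathsf{WR}(x)}S\in\mathcal{E},S\neq T'\}$, and for $e=T\xrightarrow{\mathsf{WR}(x)}S$, $D(e)=\{S\xrightarrow{\mathsf{RW}(x)}T'\mid T\xrightarrow{\mathsf{WW}(x)}T'\in\mathcal{E},T'\neq S\}$; (Intro) if a constraint is a singleton $\{e\}$, add $\{e\}\cup D(e)$ to $\mathcal{E}$ and delete the constraint; reaching an empty constraint or a cyclic $\mathcal{E}$ aborts. $\mathcal{G}_p$ is a terminal non-aborted state (so every constraint has at least two candidate edges).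 Encoding: a Boolean variable $v_e$ for each candidate edge $e$ occurring in a constraint of $\mathcal{C}^{\mathsf{WW}}_p\cup\mathcal{C}^{\mathsf{WR}}_p$ (written $\mathrm{WW}^x_{T,S}$ or $\mathrm{WR}^x_{T,S}$ for $T\xrightarrow{\mathsf{WW}(x)}S$ or $T\xrightarrow{\mathsf{WR}(x)}S$); $\Phi_{\mathcal{G}_p}$ is the conjunction over all constraints of clauses stating that exactly one of the constraint's variables is true. For an assignment $\alpha$, let $G_\alpha$ be the edge set $\mathcal{E}_p\cup\{e\mid \alpha(v_e)=\mathsf{true}\}$ together with all edges $T\xrightarrow{\mathsf{RW}(x)}S$ ($T\neq S$) such that $T'\xrightarrow{\mathsf{WR}(x)}T$ and $T'\xrightarrow{\mathsf{WW}(x)}S$ both belong to that set for some $T'$. A formula is satisfiable modulo acyclicity if some assignment satisfying it has $G_\alpha$ acyclic (no directed cycle, including self-loops, ignoring labels). 2-width-cycle clauses: let $\rightsquigarrow$ be reflexive-transitive reachability in $\mathcal{E}_p$ (ignoring labels). For distinct variables $v_1$ (edge from $S$ to $T$) and $v_2$ (edge from $T'$ to $S'$) with $T\rightsquigarrow T'$ and $S'\rightsquigarrow S$, the clause $\neg v_1\vee\neg v_2$; and for every key $x$ and transactions $T,T',S$ with $T'\neq T$, $T'\neq S$, $T'\rightsquigarrow S$, such that $\mathrm{WW}^x_{T,T'}$ and $\mathrm{WR}^x_{T,S}$ are both variables, the clause $\neg\mathrm{WW}^x_{T,T'}\vee\neg\mathrm{WR}^x_{T,S}$. *)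

From HB Require Import structures.
From mathcomp Require Import all_boot.
From Stdlib Require Import Relations.
Set Implicit Arguments. Unset Strict Implicit. Unset Printing Implicit Defensive.

Section Defs.
Variables (Tx K : finType) (V : Type).

Inductive op := OpR of K & V | OpW of K & V.

Definition op_key (o : op) : K := match o with OpR x _ => x | OpW x _ => x end.
Definition is_write_to (x : K) (o : op) : bool :=
  if o is OpW y _ then y == x else false.

(* T |- W(x,v): the last write to x in (program-ordered) s writes v *)
Definition tx_writes (s : seq op) (x : K) (v : V) : Prop :=
  exists s1 s2, s = s1 ++ OpW x v :: s2 /\ all (fun o => ~~ is_write_to x o) s2.
(* T |- R(x,v): T reads x before writing it, and the first such read returns v,
   i.e. the first operation on x in s is R(x,v) *)
Definition tx_reads (s : seq op) (x : K) (v : V) : Prop :=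
  exists s1 s2, s = s1 ++ OpR x v :: s2 /\ all (fun o => op_key o != x) s1.

(* transactions are the elements of Tx; h_ops T is the program-ordered list of
   operations of T; h_SO is session order; h_bot is T_bot *)
Record history := History {
  h_ops : Tx -> seq op;
  h_SO : Tx -> Tx -> Prop;
  h_bot : Tx }.

Definition writes (H : history) T x v := tx_writes (h_ops H T) x v.
Definition reads (H : history) T x v := tx_reads (h_ops H T) x v.
Definition WriteTx (H : history) x T := exists v, writes H T x v.

Definition wf_history (H : history) : Prop :=
  [/\ forall T, h_ops H T <> [::],
      forall x, exists v, writes H (h_bot H) x v &
      exists (sess : Tx -> nat) (SO' : Tx -> Tx -> Prop),
        [/\ forall T S, h_SO H T S <-> (T = h_bot H /\ S <> h_bot H) \/ SO' T S,
            forall T S, SO' T S -> [/\ T <> h_bot H, S <> h_bot H & sess T = sess S],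
            forall T, ~ SO' T T,
            forall T S U, SO' T S -> SO' S U -> SO' T U &
            forall T S, T <> h_bot H -> S <> h_bot H -> T <> S -> sess T = sess S ->
              SO' T S \/ SO' S T]].

Definition label := (unit + (K + (K + K)))%type.
Definition LSO : label := inl tt.
Definition LWR (x : K) : label := inr (inl x).
Definition LWW (x : K) : label := inr (inr (inl x)).
Definition LRW (x : K) : label := inr (inr (inr x)).

Definition edge := (Tx * label * Tx)%type.
Definition src (e : edge) : Tx := e.1.1.
Definition lbl (e : edge) : label := e.1.2.
Definition dst (e : edge) : Tx := e.2.

Definition erel (E : {set edge}) : rel Tx :=
  fun T S => [exists l : label, (T, l, S) \in E].
Definition cyclic (E : {set edge}) : bool :=
  [exists T, exists S, erel E T S && connect (erel E) S T].

Definition Dset (E : {set edge}) (e : edge) : {set edge} :=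
  let: (T, l, T') := e in
  match l with
  | inr (inr (inl x)) => (* e = T -WW(x)-> T' *)
      [set e' : edge | [&& lbl e' == LRW x, dst e' == T',
                           (T, LWR x, src e') \in E & src e' != T']]
  | inr (inl x) => (* e = T -WR(x)-> S, with S := T' *)
      [set e' : edge | [&& lbl e' == LRW x, src e' == T',
                           (T, LWW x, dst e') \in E & dst e' != T']]
  | _ => set0
  end.

Record pstate := PState {
  pE : {set edge};
  pWW : {set {set edge}};
  pWR : {set {set edge}} }.

(* the hyper-polygraph of H, as the initial pruning state *)
Definition init_state (H : history) (s : pstate) : Prop :=
  [/\ forall e, e \in pE s <->
        (lbl e = LSO /\ h_SO H (src e) (dst e)) \/
        (exists x v, [/\ lbl e = LWR x, reads H (dst e) x v &
                        forall T, writes H T x v <-> T = src e]),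
      forall c, c \in pWW s <->
        exists x T S, [/\ T <> S, WriteTx H x T, WriteTx H x S &
                         c = [set (T, LWW x, S); (S, LWW x, T)]] &
      forall c, c \in pWR s <->
        exists S x v, reads H S x v /\
          forall e, e \in c <-> exists T, e = (T, LWR x, S) /\ writes H T x v].

Inductive prune_step (s : pstate) : pstate -> Prop :=
| ElimWW c e : c \in pWW s -> e \in c ->
    cyclic (pE s :|: [set e] :|: Dset (pE s) e) ->
    prune_step s (PState (pE s) ((c :\ e) |: (pWW s :\ c)) (pWR s))
| ElimWR c e : c \in pWR s -> e \in c ->
    cyclic (pE s :|: [set e] :|: Dset (pE s) e) ->
    prune_step s (PState (pE s) (pWW s) ((c :\ e) |: (pWR s :\ c)))
| IntroWW c e : c \in pWW s -> c = [set e] ->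
    prune_step s (PState (pE s :|: [set e] :|: Dset (pE s) e) (pWW s :\ c) (pWR s))
| IntroWR c e : c \in pWR s -> c = [set e] ->
    prune_step s (PState (pE s :|: [set e] :|: Dset (pE s) e) (pWW s) (pWR s :\ c)).

Definition aborted (s : pstate) : bool :=
  [|| cyclic (pE s), set0 \in pWW s | set0 \in pWR s].

(* s is a terminal non-aborted state reached by pruning from the hyper-polygraph
   of H (pruning stops as soon as an aborted state is reached) *)
Definition pruned (H : history) (s : pstate) : Prop :=
  exists s0, [/\ init_state H s0,
    clos_refl_trans pstate (fun a b => ~~ aborted a /\ prune_step a b) s0 s,
    ~~ aborted s &
    forall s', ~ prune_step s s'].

Definition constraints (s : pstate) : {set {set edge}} := pWW s :|: pWR s.

Definition Vars (s : pstate) : {set edge} := \bigcup_(c in constraints s) c.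

Definition assignment := edge -> bool.

Definition Phi (s : pstate) (a : assignment) : Prop :=
  forall c, c \in constraints s -> #|[set e in c | a e]| = 1.

Definition Gbase (s : pstate) (a : assignment) : {set edge} :=
  pE s :|: [set e in Vars s | a e].
Definition Galpha (s : pstate) (a : assignment) : {set edge} :=
  Gbase s a :|:
  [set e : edge | [exists x : K, exists T' : Tx,
     [&& lbl e == LRW x, src e != dst e,
         (T', LWR x, src e) \in Gbase s a & (T', LWW x, dst e) \in Gbase s a]]].

Definition sat_mod_acyclic (s : pstate) (f : assignment -> Prop) : Prop :=
  exists a, f a /\ ~~ cyclic (Galpha s a).

Definition reach (s : pstate) : rel Tx := connect (erel (pE s)).

(* two_width_clause s v1 v2 : the clause  ~v1 \/ ~v2  is a 2-width-cycle clause *)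
Definition two_width_clause (s : pstate) (v1 v2 : edge) : Prop :=
  [/\ v1 \in Vars s, v2 \in Vars s, v1 != v2,
      reach s (dst v1) (src v2) & reach s (dst v2) (src v1)]
  \/ exists x T T' S, [/\ T' != T, T' != S, reach s T' S,
        v1 = (T, LWW x, T') & v2 = (T, LWR x, S)]
                    /\ v1 \in Vars s /\ v2 \in Vars s.

Definition Fenc (s : pstate) (a : assignment) : Prop :=
  Phi s a /\ forall v1 v2, two_width_clause s v1 v2 -> ~~ a v1 || ~~ a v2.

End Defs.

(* Every 2-width-cycle clause is a consequence of acyclicity: if both of its
   variables are true under an assignment, then G_alpha contains a cycle of
   width two, made of the two chosen edges (or, for the second kind of clause,
   of the RW edge S -> T' they induce) closed up by paths of known edges.  So
   adding these clauses removes no assignment that makes G_alpha acyclic. *)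

From HB Require Import structures.
From mathcomp Require Import all_boot.

Set Implicit Arguments.
Unset Strict Implicit.
Unset Printing Implicit Defensive.

Section Graphs.
Variables Tx K : finType.
Implicit Types (E F : {set edge Tx K}) (T S : Tx).

Lemma erel_mem E T l S : (T, l, S) \in E -> erel E T S.
Proof. by move=> TlS; apply/existsP; exists l. Qed.

Lemma connect_erelS E F : E \subset F ->
  forall T S, connect (erel E) T S -> connect (erel F) T S.
Proof.
move=> sEF; apply: connect_sub => T S /existsP [l TlS].
exact/connect1/(erel_mem (subsetP sEF _ TlS)).
Qed.

Lemma cyclic_edge_connect E T l S :
  (T, l, S) \in E -> connect (erel E) S T -> cyclic E.
Proof.
by move=> TlS ST; apply/existsP; exists T; apply/existsP; exists S; rewrite (erel_mem TlS).
Qed.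

End Graphs.

Section TwoWidthClauses.
Variables Tx K : finType.
Variables (s : pstate Tx K) (a : assignment Tx K).

Lemma pE_sub_Galpha : pE s \subset Galpha s a.
Proof. by apply/subsetP => e Ee; rewrite !inE Ee. Qed.

Lemma true_var_Gbase e : e \in Vars s -> a e -> e \in Gbase s a.
Proof. by move=> Ve ae; rewrite !inE Ve ae orbT. Qed.

Lemma true_var_Galpha e : e \in Vars s -> a e -> e \in Galpha s a.
Proof. by move=> Ve ae; rewrite inE true_var_Gbase. Qed.

Lemma RW_Galpha x T T' S :
  (T, LWR x, S) \in Gbase s a -> (T, LWW x, T') \in Gbase s a -> S != T' ->
  (S, LRW x, T') \in Galpha s a.
Proof.
move=> TS TT' neST'; rewrite inE; apply/orP; right; rewrite inE.
by apply/existsP; exists x; apply/existsP; exists T; rewrite /= eqxx neST' TS TT'.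
Qed.

Lemma two_width_clause_cyclic v1 v2 :
  two_width_clause s v1 v2 -> a v1 -> a v2 -> cyclic (Galpha s a).
Proof.
have reachG := connect_erelS pE_sub_Galpha.
case=> [[V1 V2 _ r12 r21] | [x [T [T' [S [[neT' neS' r -> ->] [V1 V2]]]]]]] a1 a2.
- case: v1 V1 a1 r12 r21 => [[T1 l1] S1] V1 a1 r12 r21.
  case: v2 V2 a2 r12 r21 => [[T2 l2] S2] V2 a2 r12 r21.
  apply: (cyclic_edge_connect (true_var_Galpha V1 a1)).
  apply: connect_trans (reachG _ _ r12) _.
  apply: connect_trans (reachG _ _ r21).
  exact/connect1/(erel_mem (true_var_Galpha V2 a2)).
- have neST' : S != T' by rewrite eq_sym.
  have ST' := RW_Galpha (true_var_Gbase V2 a2) (true_var_Gbase V1 a1) neST'.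
  exact: (cyclic_edge_connect ST' (reachG _ _ r)).
Qed.

Lemma acyclic_two_width_clauses : ~~ cyclic (Galpha s a) ->
  forall v1 v2, two_width_clause s v1 v2 -> ~~ a v1 || ~~ a v2.
Proof.
move=> acyc v1 v2 cl; rewrite -negb_and; apply/andP => -[a1 a2].
by move/negP: acyc; apply; apply: (two_width_clause_cyclic cl).
Qed.

End TwoWidthClauses.

Theorem theoremE2 (Tx K : finType) (V : Type) (H : history Tx K V)
  (s : pstate Tx K) :
  wf_history H -> pruned H s ->
  (sat_mod_acyclic s (Phi s) <-> sat_mod_acyclic s (Fenc s)).
Proof.
move=> _ _; split=> [[a [Phi_a acyc]] | [a [[Phi_a _] acyc]]]; exists a => //.
by split=> //; split=> //; apply: acyclic_two_width_clauses.
Qed.
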